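(* Let $f:\mathbb{R}^n_{>0}\to\mathbb{R}^n_{>0}$ be order-preserving and homogeneous. Then $\delta(f)=\log r(f)-\log\lambda(f)$, where $\delta(f)=\inf\{d_H(x,f(x)):x\in\mathbb{R}^n_{>0}\}$.
   Context: Entrywise order. Order-preserving: $x\le y\Rightarrow f(x)\le f(y)$; homogeneous: $f(tx)=tf(x)$ for $t>0$. $d_H(x,y)=\log\max_{i,j}\frac{y_ix_j}{x_iy_j}$. $r(f)=\inf_{x\in\mathbb{R}^n_{>0}}\max_if(x)_i/x_i$ and $\lambda(f)=\sup_{x\in\mathbb{R}^n_{>0}}\min_if(x)_i/x_i$ are the upper and lower Collatz–Wielandt numbers. *)

From HB Require Import structures.
From mathcomp Require Import all_boot all_order all_algebra.
From mathcomp Require Import all_classical all_reals all_analysis.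
Set Implicit Arguments. Unset Strict Implicit. Unset Printing Implicit Defensive.
Import Order.TTheory GRing.Theory Num.Theory.
Local Open Scope ring_scope.
Local Open Scope classical_set_scope.

Section Defs.
Variables (R : realType) (n : nat).

Definition vec := 'I_n.+1 -> R.

Definition vpos (x : vec) : Prop := forall i, 0 < x i.

Definition vmax (F : 'I_n.+1 -> R) : R := \big[Num.max/F ord0]_(i < n.+1) F i.
Definition vmin (F : 'I_n.+1 -> R) : R := \big[Num.min/F ord0]_(i < n.+1) F i.

Definition order_preserving (f : vec -> vec) : Prop :=
  forall x y, vpos x -> vpos y -> (forall i, x i <= y i) -> forall i, f x i <= f y i.

Definition homogeneous (f : vec -> vec) : Prop :=
  forall (t : R) x, 0 < t -> vpos x -> f (fun i => t * x i) = (fun i => t * f x i).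

Definition dH (x y : vec) : R :=
  ln (vmax (fun i => vmax (fun j => (y i * x j) / (x i * y j)))).

Definition cw_upper (f : vec -> vec) : R :=
  inf [set vmax (fun i => f x i / x i) | x in vpos].
Definition cw_lower (f : vec -> vec) : R :=
  sup [set vmin (fun i => f x i / x i) | x in vpos].

Definition delta (f : vec -> vec) : R :=
  inf [set dH x (f x) | x in vpos].

End Defs.

From mathcomp Require Import all_boot all_order all_algebra.
From mathcomp Require Import all_classical all_reals all_analysis.
From mathcomp Require Import ring lra.
Set Implicit Arguments. Unset Strict Implicit. Unset Printing Implicit Defensive.
Import Order.TTheory GRing.Theory Num.Theory.
Local Open Scope ring_scope.
Local Open Scope classical_set_scope.

(* Conjugating by exp turns f into a map g on R^n that is monotone and commutes with adding
   constants, and turns log (f x)_i/x_i into g(u)_i - u_i.  Since d_H(x, f x) is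
   log max_i (f x)_i/x_i - log min_i (f x)_i/x_i, the bound delta >= log r - log lambda is
   immediate.  Conversely, take u0 with g u0 <= u0 + a and v with v + b <= g v, where a and b
   are close to log r and log lambda.  The resolvent w |-> (s u0 + g w)/(1 + s) is a
   1/(1+s)-contraction for the sup norm which preserves
   v + min (u0 - v) + b/s <= w <= u0 + a/s, and g w - w = (1+s)(res w - w) + s (w - u0).
   Along its iterates g w - w therefore oscillates by at most
   a - b + s (max (u0 - v) - min (u0 - v)) plus a geometrically vanishing error,
   and s can be chosen small. *)

Lemma exists_expr_mul_lt (R : realType) (q C e : R) :
  `|q| < 1 -> 0 < e -> exists N, q ^+ N * C < e.
Proof.
move=> q_lt1 e_gt0.
have qC0 : (fun N => q ^+ N * C) @ \oo --> 0.
  by rewrite -(mul0r C); apply: cvgMr_tmp; exact: cvg_expr.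
have [N _ hN] := cvgr0_norm_lt _ qC0 _ e_gt0.
by exists N; apply: le_lt_trans (ler_norm _) (hN N (leqnn N)).
Qed.

Section Extrema.
Variables (R : realType) (n : nat).
Implicit Types F : 'I_n.+1 -> R.

Lemma vmax_ge F i : F i <= vmax F.
Proof. exact: le_bigmax. Qed.

Lemma vmin_le F i : vmin F <= F i.
Proof. exact: bigmin_le. Qed.

Lemma vmax_le F c : (forall i, F i <= c) -> vmax F <= c.
Proof. by move=> Fc; apply: bigmax_le. Qed.

Lemma vmax_attained F : exists i, vmax F = F i.
Proof.
rewrite /vmax; apply: (big_ind (fun m => exists i, m = F i)) => [|_ _ [i ->] [j ->]|i _].
- by exists ord0.
- by case: (leP (F i) (F j)); [exists j | exists i].
- by exists i.
Qed.

Lemma vmin_attained F : exists i, vmin F = F i.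
Proof.
rewrite /vmin; apply: (big_ind (fun m => exists i, m = F i)) => [|_ _ [i ->] [j ->]|i _].
- by exists ord0.
- by case: (leP (F i) (F j)); [exists i | exists j].
- by exists i.
Qed.

Lemma vmax_gt0 F : (forall i, 0 < F i) -> 0 < vmax F.
Proof. by move=> F_gt0; have [i ->] := vmax_attained F. Qed.

Lemma vmin_gt0 F : (forall i, 0 < F i) -> 0 < vmin F.
Proof. by move=> F_gt0; have [i ->] := vmin_attained F. Qed.

Lemma vmax_quotient F : (forall i, 0 < F i) ->
  vmax (fun i => vmax (fun j => F i / F j)) = vmax F / vmin F.
Proof.
move=> F_gt0; have [i Mi] := vmax_attained F; have [j mj] := vmin_attained F.
apply/le_anti/andP; split.
- apply: vmax_le => k; apply: vmax_le => l.
  apply: ler_pM; rewrite ?invr_ge0 ?vmax_ge ?(ltW (F_gt0 _)) //.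
  by rewrite lef_pV2 ?posrE ?vmin_gt0 ?vmin_le.
- by rewrite Mi mj; apply: le_trans (vmax_ge _ i); exact: (vmax_ge (fun l => F i / F l)).
Qed.

End Extrema.

Lemma dH_ratio (R : realType) (n : nat) (x y : vec R n) : vpos x -> vpos y ->
  dH x y = ln (vmax (fun i => y i / x i)) - ln (vmin (fun i => y i / x i)).
Proof.
move=> x_gt0 y_gt0; set F := fun i => y i / x i.
have F_gt0 i : 0 < F i by rewrite divr_gt0.
rewrite -ln_div ?posrE ?vmax_gt0 ?vmin_gt0 // -vmax_quotient //.
rewrite /dH; congr (ln (vmax _)); apply/funext => i; congr (vmax _); apply/funext => j.
rewrite /F; field.
by rewrite !lt0r_neq0.
Qed.

Section Topical.
Variables (R : realType) (n : nat) (g : vec R n -> vec R n).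
Hypothesis g_mono : forall u v, (forall i, u i <= v i) -> forall i, g u i <= g v i.
Hypothesis g_shift : forall u c, g (fun i => u i + c) = (fun i => g u i + c).

Lemma topical_le_shift (u v : vec R n) (c : R) :
  (forall i, u i <= v i + c) -> forall i, g u i <= g v i + c.
Proof. by move=> uvc i; have := g_mono (v := fun j => v j + c) uvc i; rewrite g_shift. Qed.

Lemma topical_nonexpansive (u v : vec R n) (d : R) :
  (forall i, `|u i - v i| <= d) -> forall i, `|g u i - g v i| <= d.
Proof.
move=> uvd i.
have uv j : u j <= v j + d by have := uvd j; rewrite ler_norml; lra.
have vu j : v j <= u j + d by have := uvd j; rewrite ler_norml; lra.
have := topical_le_shift uv i; have := topical_le_shift vu i; rewrite ler_norml; lra.
Qed.

Lemma topical_super_le_sub u v a b : (forall i, g u i <= u i + a) ->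
  (forall i, v i + b <= g v i) -> b <= a.
Proof.
move=> gu gv; have [k mk] := vmin_attained (fun i => u i - v i).
have vu i : v i <= u i + - (u k - v k).
  by have := vmin_le (fun i => u i - v i) i; rewrite mk; lra.
have := topical_le_shift vu k; have := gu k; have := gv k; lra.
Qed.

Section Resolvent.
Variables (u0 v : vec R n) (a b s : R).
Hypothesis gu0 : forall i, g u0 i <= u0 i + a.
Hypothesis gv : forall i, v i + b <= g v i.
Hypothesis s_gt0 : 0 < s.

Let s1_gt0 : 0 < 1 + s := addr_gt0 ltr01 s_gt0.

Definition resolvent (w : vec R n) : vec R n := fun i => (s * u0 i + g w i) / (1 + s).

Definition resolvent_iter k := iter k resolvent (fun i => u0 i + a / s).

Let dmin := vmin (fun i => u0 i - v i).
Let dmax := vmax (fun i => u0 i - v i).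

Lemma resolvent_le w : (forall i, w i <= u0 i + a / s) ->
  forall i, resolvent w i <= u0 i + a / s.
Proof.
move=> wu i; have := topical_le_shift wu i; have := gu0 i.
rewrite /resolvent ler_pdivrMr ?s1_gt0 //.
have -> : (u0 i + a / s) * (1 + s) = s * u0 i + (u0 i + a / s + a).
  by field; rewrite gt_eqF.
lra.
Qed.

Lemma resolvent_ge w : (forall i, v i + (dmin + b / s) <= w i) ->
  forall i, v i + (dmin + b / s) <= resolvent w i.
Proof.
move=> vw i.
have wv j : v j <= w j - (dmin + b / s) by have := vw j; lra.
have u0v : s * (v i + dmin) <= s * u0 i.
  by rewrite ler_wpM2l ?(ltW s_gt0) // -lerBrDl vmin_le.
have := topical_le_shift wv i; have := gv i.
rewrite /resolvent ler_pdivlMr ?s1_gt0 //.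
have -> : (v i + (dmin + b / s)) * (1 + s) =
    s * (v i + dmin) + (v i + b + (dmin + b / s)).
  by field; rewrite gt_eqF.
lra.
Qed.

Lemma resolvent_iter_bounds k i :
  v i + (dmin + b / s) <= resolvent_iter k i <= u0 i + a / s.
Proof.
elim: k i => [|k IH] i /=; last first.
  by rewrite resolvent_ge ?resolvent_le // => j; case/andP: (IH j).
have ba : b / s <= a / s.
  by rewrite ler_pM2r ?invr_gt0 // (topical_super_le_sub gu0 gv).
have := vmin_le (fun i => u0 i - v i) i; rewrite lexx andbT -/dmin; lra.
Qed.

Lemma resolvent_contract w w' d : (forall i, `|w i - w' i| <= d) ->
  forall i, `|resolvent w i - resolvent w' i| <= d / (1 + s).
Proof.
move=> ww' i; rewrite /resolvent -mulrBl normrM.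
rewrite [`|(1 + s)^-1|]gtr0_norm ?invr_gt0 ?s1_gt0 //.
rewrite ler_pM2r ?invr_gt0 ?s1_gt0 //.
by have := topical_nonexpansive ww' i; rewrite opprD addrACA subrr add0r.
Qed.

Let step0 := vmax (fun i => `|resolvent_iter 1 i - resolvent_iter 0 i|).

Lemma resolvent_iter_step k i :
  `|resolvent_iter k.+1 i - resolvent_iter k i| <= (1 + s)^-1 ^+ k * step0.
Proof.
elim: k i => [|k IH] i; first by rewrite expr0 mul1r; exact: vmax_ge.
by rewrite exprSr mulrAC; apply: (resolvent_contract IH).
Qed.

Lemma resolvent_eigen_gap w i :
  g w i - w i = (1 + s) * (resolvent w i - w i) + s * (w i - u0 i).
Proof. by rewrite /resolvent; field; rewrite gt_eqF ?s1_gt0. Qed.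

Lemma resolvent_iter_gap k i j :
  (g (resolvent_iter k) i - resolvent_iter k i) -
  (g (resolvent_iter k) j - resolvent_iter k j) <=
  a - b + s * (dmax - dmin) + 2 * (1 + s) * ((1 + s)^-1 ^+ k * step0).
Proof.
set w := resolvent_iter k; set e := (1 + s)^-1 ^+ k * step0.
have step l : `|(1 + s) * (resolvent w l - w l)| <= (1 + s) * e.
  rewrite normrM gtr0_norm ?s1_gt0 // ler_pM2l ?s1_gt0 //.
  exact: resolvent_iter_step.
have [/andP [_ wi_le] /andP [wj_ge _]] :=
  (resolvent_iter_bounds k i, resolvent_iter_bounds k j).
have upper : s * (w i - u0 i) <= a.
  by rewrite -ler_pdivlMl //; have := wi_le; rewrite -/w; lra.
have lower : s * (dmin - dmax) + b <= s * (w j - u0 j).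
  have : dmin - dmax + b / s <= w j - u0 j.
    have := vmax_ge (fun i => u0 i - v i) j; rewrite -/dmax.
    by have := wj_ge; rewrite -/w; lra.
  move/(ler_wpM2l (ltW s_gt0)).
  suff -> : s * (dmin - dmax + b / s) = s * (dmin - dmax) + b by [].
  by field; rewrite gt_eqF.
rewrite !resolvent_eigen_gap.
have := step i; have := step j; rewrite !ler_norml => /andP [? ?] /andP [? ?]; lra.
Qed.
End Resolvent.

Lemma topical_approx_eigenvector u0 v a b eta :
  (forall i, g u0 i <= u0 i + a) -> (forall i, v i + b <= g v i) -> 0 < eta ->
  exists w, forall i j, (g w i - w i) - (g w j - w j) <= a - b + eta.
Proof.
move=> gu0 gv eta_gt0.
set osc := vmax (fun i => u0 i - v i) - vmin (fun i => u0 i - v i).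
have osc_ge0 : 0 <= osc by rewrite subr_ge0 (le_trans (vmin_le _ ord0) (vmax_ge _ ord0)).
pose s := eta / (2 * (osc + 1)).
have s_gt0 : 0 < s by rewrite divr_gt0 //; lra.
have s_osc : s * osc <= eta / 2.
  have : s * (2 * (osc + 1)) = eta by rewrite /s divfK // gt_eqF //; lra.
  by have := s_gt0; lra.
have q_lt1 : `|(1 + s)^-1| < 1.
  have s1_gt0 : 0 < 1 + s by lra.
  by rewrite gtr0_norm ?invr_gt0 // invf_lt1 //; lra.
pose step0 := vmax (fun i => `|resolvent_iter u0 a s 1 i - resolvent_iter u0 a s 0 i|).
have eta2_gt0 : 0 < eta / 2 by rewrite divr_gt0.
have [N small] := exists_expr_mul_lt (2 * (1 + s) * step0) q_lt1 eta2_gt0.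
exists (resolvent_iter u0 a s N) => i j.
have := resolvent_iter_gap gu0 gv s_gt0 N i j; rewrite -/osc -/step0; lra.
Qed.
End Topical.

Definition ratio_max (R : realType) (n : nat) (f : vec R n -> vec R n) (x : vec R n) :=
  vmax (fun i => f x i / x i).
Definition ratio_min (R : realType) (n : nat) (f : vec R n -> vec R n) (x : vec R n) :=
  vmin (fun i => f x i / x i).
Definition log_conj (R : realType) (n : nat) (f : vec R n -> vec R n) (u : vec R n) :
  vec R n := fun i => ln (f (fun j => expR (u j)) i).

Section CollatzWielandt.
Variables (R : realType) (n : nat) (f : vec R n -> vec R n).
Hypothesis f_pos : forall x, vpos x -> vpos (f x).
Hypothesis f_mono : order_preserving f.
Hypothesis f_hom : homogeneous f.

Lemma vpos1 : vpos (fun _ : 'I_n.+1 => 1 : R).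
Proof. by move=> i; exact: ltr01. Qed.

Lemma vpos_expR (u : vec R n) : vpos (fun i => expR (u i)).
Proof. by move=> i; exact: expR_gt0. Qed.

Lemma ratio_gt0 x : vpos x -> forall i, 0 < f x i / x i.
Proof. by move=> x_gt0 i; exact: divr_gt0 (f_pos x_gt0 i) (x_gt0 i). Qed.

Lemma ratio_max_gt0 x : vpos x -> 0 < ratio_max f x.
Proof. by move=> x_gt0; apply/vmax_gt0/ratio_gt0. Qed.

Lemma ratio_min_gt0 x : vpos x -> 0 < ratio_min f x.
Proof. by move=> x_gt0; apply/vmin_gt0/ratio_gt0. Qed.

Lemma ratio_min_le_max x y : vpos x -> vpos y -> ratio_min f y <= ratio_max f x.
Proof.
move=> x_gt0 y_gt0; have [k ck] := vmin_attained (fun i => x i / y i).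
set c := x k / y k in ck.
have c_gt0 : 0 < c by rewrite divr_gt0.
have cy_gt0 : vpos (fun i => c * y i) by move=> i; rewrite mulr_gt0.
have cy_le_x i : c * y i <= x i by rewrite -ler_pdivlMr // -ck vmin_le.
have := f_mono cy_gt0 x_gt0 cy_le_x k; rewrite f_hom // => cfy_le.
apply: le_trans (vmin_le _ k) (le_trans _ (vmax_ge _ k)).
have -> : f y k / y k = c * f y k / x k by rewrite /c; field; rewrite !gt_eqF.
by rewrite ler_pM2r ?invr_gt0.
Qed.

Lemma f_expR_gt0 u i : 0 < f (fun j => expR (u j)) i.
Proof. exact: f_pos (vpos_expR u) i. Qed.

Lemma log_conj_mono u v : (forall i, u i <= v i) ->
  forall i, log_conj f u i <= log_conj f v i.
Proof.
move=> uv i; rewrite /log_conj ler_ln ?posrE ?f_expR_gt0 //.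
by apply: f_mono; [exact: vpos_expR | exact: vpos_expR | move=> j; rewrite ler_expR].
Qed.

Lemma log_conj_shift u c :
  log_conj f (fun i => u i + c) = (fun i => log_conj f u i + c).
Proof.
apply/funext => i; rewrite /log_conj.
have -> : (fun j => expR (u j + c)) = (fun j => expR c * expR (u j)).
  by apply/funext => j; rewrite expRD mulrC.
by rewrite (f_hom (expR_gt0 c) (vpos_expR u)) lnM ?posrE ?expR_gt0 ?f_expR_gt0 // expRK addrC.
Qed.

Lemma log_conj_ln x : vpos x -> log_conj f (fun i => ln (x i)) = (fun i => ln (f x i)).
Proof.
move=> x_gt0; rewrite /log_conj.
suff -> : (fun j => expR (ln (x j))) = x by [].
by apply/funext => j; rewrite lnK ?posrE.
Qed.

Lemma ratio_spread_le x y eta : vpos x -> vpos y -> 0 < eta ->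
  exists2 z, vpos z &
    ln (ratio_max f z) - ln (ratio_min f z) <= ln (ratio_max f x) - ln (ratio_min f y) + eta.
Proof.
move=> x_gt0 y_gt0 eta_gt0.
have sub_x i : log_conj f (fun i => ln (x i)) i <= ln (x i) + ln (ratio_max f x).
  rewrite log_conj_ln // -lnM ?posrE ?ratio_max_gt0 //.
  rewrite ler_ln ?posrE ?mulr_gt0 ?ratio_max_gt0 ?(f_pos x_gt0) //.
  by rewrite mulrC -ler_pdivrMr //; exact: vmax_ge.
have super_y i : ln (y i) + ln (ratio_min f y) <= log_conj f (fun i => ln (y i)) i.
  rewrite log_conj_ln // -lnM ?posrE ?ratio_min_gt0 //.
  rewrite ler_ln ?posrE ?mulr_gt0 ?ratio_min_gt0 ?(f_pos y_gt0) //.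
  by rewrite mulrC -ler_pdivlMr //; exact: vmin_le.
have [w gap] := topical_approx_eigenvector log_conj_mono log_conj_shift sub_x super_y eta_gt0.
exists (fun i => expR (w i)); first exact: vpos_expR.
have ln_ratio i : ln (f (fun j => expR (w j)) i / expR (w i)) = log_conj f w i - w i.
  by rewrite ln_div ?posrE ?f_expR_gt0 ?expR_gt0 // expRK.
rewrite /ratio_max /ratio_min.
have [i ->] := vmax_attained (fun i => f (fun j => expR (w j)) i / expR (w i)).
have [j ->] := vmin_attained (fun i => f (fun j => expR (w j)) i / expR (w i)).
by rewrite !ln_ratio; exact: gap.
Qed.

Lemma cw_upper_le x : vpos x -> cw_upper f <= ratio_max f x.
Proof.
move=> x_gt0; apply: ge_inf; last by exists x.
by exists (ratio_min f (fun=> 1)) => _ [y y_gt0 <-]; exact: ratio_min_le_max y_gt0 vpos1.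
Qed.

Lemma ratio_min_le_cw_lower x : vpos x -> ratio_min f x <= cw_lower f.
Proof.
move=> x_gt0; apply: ub_le_sup; last by exists x.
by exists (ratio_max f (fun=> 1)) => _ [y y_gt0 <-]; exact: ratio_min_le_max vpos1 y_gt0.
Qed.

Lemma cw_upper_gt0 : 0 < cw_upper f.
Proof.
apply: lt_le_trans (ratio_min_gt0 vpos1) _.
apply: lb_le_inf; first by exists (ratio_max f (fun=> 1)), (fun=> 1); first exact: vpos1.
by move=> _ [y y_gt0 <-]; exact: ratio_min_le_max y_gt0 vpos1.
Qed.

Lemma cw_lower_gt0 : 0 < cw_lower f.
Proof. exact: lt_le_trans (ratio_min_gt0 vpos1) (ratio_min_le_cw_lower vpos1). Qed.

Lemma dH_self x : vpos x -> dH x (f x) = ln (ratio_max f x) - ln (ratio_min f x).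
Proof. by move=> x_gt0; rewrite dH_ratio //; exact: f_pos. Qed.

Lemma exists_ratio_max_lt e : 0 < e ->
  exists2 x, vpos x & ln (ratio_max f x) < ln (cw_upper f) + e.
Proof.
move=> e_gt0.
have r_lt : cw_upper f < expR (ln (cw_upper f) + e).
  by rewrite -{1}(lnK (cw_upper_gt0 : cw_upper f \is Num.pos)) ltr_expR ltrDl.
have [_ [x x_gt0 <-] Mx_lt] :=
  inf_lt (ex_intro _ _ (ex_intro2 _ _ _ vpos1 erefl)) r_lt.
by exists x => //; rewrite -ltr_expR lnK ?posrE ?ratio_max_gt0.
Qed.

Lemma exists_ratio_min_gt e : 0 < e ->
  exists2 x, vpos x & ln (cw_lower f) - e < ln (ratio_min f x).
Proof.
move=> e_gt0.
have l_gt : expR (ln (cw_lower f) - e) < cw_lower f.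
  by rewrite -{2}(lnK (cw_lower_gt0 : cw_lower f \is Num.pos)) ltr_expR gtrDl oppr_lt0.
have [_ [x x_gt0 <-] mx_gt] :=
  sup_gt (ex_intro _ _ (ex_intro2 _ _ _ vpos1 erefl)) l_gt.
by exists x => //; rewrite -ltr_expR lnK ?posrE ?ratio_min_gt0.
Qed.

Lemma delta_lbound :
  lbound [set dH x (f x) | x in @vpos R n] (ln (cw_upper f) - ln (cw_lower f)).
Proof.
move=> _ [x x_gt0 <-]; rewrite dH_self //.
have := cw_upper_le x_gt0; rewrite -ler_ln ?posrE ?cw_upper_gt0 ?ratio_max_gt0 //.
have := ratio_min_le_cw_lower x_gt0; rewrite -ler_ln ?posrE ?cw_lower_gt0 ?ratio_min_gt0 //.
lra.
Qed.

Lemma cw_gap_le_delta : ln (cw_upper f) - ln (cw_lower f) <= delta f.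
Proof.
apply: lb_le_inf delta_lbound.
by exists (dH (fun=> 1) (f (fun=> 1))), (fun=> 1); first exact: vpos1.
Qed.

Lemma delta_le_cw_gap : delta f <= ln (cw_upper f) - ln (cw_lower f).
Proof.
apply/ler_addgt0Pr => eta eta_gt0; have e_gt0 : 0 < eta / 3 by rewrite divr_gt0.
have [x x_gt0 Mx_lt] := exists_ratio_max_lt e_gt0.
have [y y_gt0 my_gt] := exists_ratio_min_gt e_gt0.
have [z z_gt0 spread] := ratio_spread_le x_gt0 y_gt0 e_gt0.
have delta_le : delta f <= dH z (f z).
  apply: ge_inf; last by exists z.
  by exists (ln (cw_upper f) - ln (cw_lower f)); exact: delta_lbound.
by move: delta_le; rewrite dH_self //; lra.
Qed.

End CollatzWielandt.

Theorem lemma2p6 (R : realType) (n : nat) (f : vec R n -> vec R n)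
  (fpos : forall x, vpos x -> vpos (f x))
  (fmono : order_preserving f) (fhom : homogeneous f) :
  delta f = ln (cw_upper f) - ln (cw_lower f).
Proof.
by apply/le_anti; rewrite (delta_le_cw_gap fpos fmono fhom) (cw_gap_le_delta fpos fmono fhom).
Qed.
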